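(* Let $\mathcal B(\mathcal S,\mathcal D)$ be a stabilizer basis with associated unitary $\Phi$, and let $\hat d_1,\hat d_2,\hat s_1,\hat s_2\in\{0,1\}^n$ and $\phi_1,\phi_2\in\mathbb C$ be such that $$\mathcal U=\phi_1\, d_{\hat d_1}s_{\hat s_1}+\phi_2\, d_{\hat d_2}s_{\hat s_2}$$ is unitary. Define $I_y=(\hat d_1+\hat d_2)\circ(\hat s_1+\hat s_2)$, $I_x=(\hat d_1+\hat d_2)+I_y$, $I_z=(\hat s_1+\hat s_2)+I_y$. Then there exist $\theta\in\mathbb R$ with $|\cos\theta|=|\phi_1|$ and a phase $\beta\in\mathbb R$ such that $$\Phi^{-1}\,\mathcal U\,\Phi = e^{i\beta}\big(\cos\theta\, I - i\sin\theta\, X_{I_x}Y_{I_y}Z_{I_z}\big)\,X_{\hat d_1}Z_{\hat s_1}.$$ That is, acting with $\mathcal U$ on $|\psi\rangle$ corresponds, on the coefficient vector $|\nu\rangle=\Phi^{-1}|\psi\rangle$, to the Pauli operator $X_{\hat d_1}Z_{\hat s_1}$ followed (up to a global phase) by a multi-qubit Pauli rotation $\cos\theta\,I-i\sin\theta\,X_{I_x}Y_{I_y}Z_{I_z}$.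
   Context: An $n$-qubit Pauli operator is a tensor product of $n$ matrices from $\{I,X,Y,Z\}$ times a phase in $\{\pm1,\pm i\}$. A stabilizer basis $\mathcal B(\mathcal S,\mathcal D)$ consists of Hermitian Pauli operators $s_1,\dots,s_n$ and $d_1,\dots,d_n$ such that: all $s_i$ pairwise commute; all $d_i$ pairwise commute; $d_i$ and $s_j$ commute for $i\neq j$; $d_i$ and $s_i$ anticommute; and the group generated by the $s_i$ does not contain $-I$. $|\psi_{\mathcal S}\rangle$ is the unit vector with $s_i|\psi_{\mathcal S}\rangle=|\psi_{\mathcal S}\rangle$. For $\hat a\in\{0,1\}^n$, $d_{\hat a}=d_1^{a_1}\cdots d_n^{a_n}$, $s_{\hat a}=s_1^{a_1}\cdots s_n^{a_n}$. $\Phi$ is the unitary with $\Phi|\hat a\rangle=d_{\hat a}|\psi_{\mathcal S}\rangle$. For a bit vector $\hat a$, $X_{\hat a}=\bigotimes_jX^{a_j}$, and similarly $Y_{\hat a}$, $Z_{\hat a}$. Bit-vector addition is mod 2, and $\circ$ denotes entrywise (Hadamard) product of bit vectors. *)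

From HB Require Import structures.
From mathcomp Require Import all_boot all_order all_algebra.
From mathcomp Require Import complex.
From mathcomp Require Import reals trigo.
Set Implicit Arguments. Unset Strict Implicit. Unset Printing Implicit Defensive.
Import Order.TTheory GRing.Theory Num.Theory.
Local Open Scope ring_scope.
Local Open Scope complex_scope.

Section Defs.
Variable R : realType.
Local Notation C := R[i].
Variable n : nat.
Local Notation N := (2 ^ n)%N.
Local Notation Mx := 'M[C]_N.

Inductive pauli1 := PI | PX | PY | PZ.

(* entry (row a, column b) of the single-qubit matrix; basis |0>=false, |1>=true *)
Definition pauli1_entry (p : pauli1) (a b : bool) : C :=
  match p with
  | PI => if a == b then 1 else 0
  | PX => if a == b then 0 else 1
  | PY => if a == b then 0 else (if a then 'i else - 'i)
  | PZ => if a == b then (if a then -1 else 1) else 0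
  end.

(* bit j of the computational-basis index k : qubit j of |k> *)
Definition bit (k : nat) (j : 'I_n) : bool := odd (k %/ 2 ^ j).

Definition bits_of (k : 'I_N) : 'I_n -> bool := fun j => bit k j.

(* tensor product P_0 (x) ... (x) P_{n-1}, written out entrywise (Kronecker product) *)
Definition pstring (p : 'I_n -> pauli1) : Mx :=
  \matrix_(a < N, b < N) \prod_(j < n) pauli1_entry (p j) (bit a j) (bit b j).

Definition ctrmx m k (M : 'M[C]_(m, k)) : 'M[C]_(k, m) := (map_mx (@conjc R) M)^T.

Definition hermitian (M : Mx) := ctrmx M = M.
Definition unitary (M : Mx) := ctrmx M *m M = 1%:M.

Definition is_pauli (M : Mx) :=
  exists (c : C) (p : 'I_n -> pauli1), c ^+ 4 = 1 /\ M = c *: pstring p.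

(* the group generated by the matrices g_i (closure of {1} under left
   multiplication by generators and their inverses) *)
Inductive in_gen (g : 'I_n -> Mx) : Mx -> Prop :=
  | gen_one : in_gen g 1%:M
  | gen_mul i M : in_gen g M -> in_gen g (g i *m M)
  | gen_mulV i M : in_gen g M -> in_gen g (invmx (g i) *m M).

Definition stabilizer_basis (s d : 'I_n -> Mx) :=
  (forall i, is_pauli (s i) /\ hermitian (s i)) /\
  (forall i, is_pauli (d i) /\ hermitian (d i)) /\
  (forall i j, s i *m s j = s j *m s i) /\
  (forall i j, d i *m d j = d j *m d i) /\
  (forall i j, i != j -> d i *m s j = s j *m d i) /\
  (forall i, d i *m s i = - (s i *m d i)) /\
  ~ in_gen s (- 1%:M).

(* g_a = g_1^{a_1} ... g_n^{a_n} (ordered product) *)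
Definition gprod (g : 'I_n -> Mx) (a : 'I_n -> bool) : Mx :=
  \big[mulmx/1%:M]_(j < n) (if a j then g j else 1%:M).

(* Phi |a> = d_a |psi> : column k of Phi is d_(bits_of k) psi *)
Definition Phi_of (d : 'I_n -> Mx) (psi : 'cV[C]_N) : Mx :=
  \matrix_(r < N, k < N) (gprod d (bits_of k) *m psi) r ord0.

Definition Xv (a : 'I_n -> bool) : Mx := pstring (fun j => if a j then PX else PI).
Definition Yv (a : 'I_n -> bool) : Mx := pstring (fun j => if a j then PY else PI).
Definition Zv (a : 'I_n -> bool) : Mx := pstring (fun j => if a j then PZ else PI).

Definition bxor (a b : 'I_n -> bool) : 'I_n -> bool := fun j => a j (+) b j.
Definition band (a b : 'I_n -> bool) : 'I_n -> bool := fun j => a j && b j.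

End Defs.

From Pilot Require Import Defs.
From HB Require Import structures.
From mathcomp Require Import all_boot all_order all_algebra.
From mathcomp Require Import complex.
From mathcomp Require Import reals trigo.
From mathcomp Require Import ring lra.
From Stdlib Require Import FunctionalExtensionality.
Set Implicit Arguments. Unset Strict Implicit. Unset Printing Implicit Defensive.
Import Order.TTheory GRing.Theory Num.Theory.
Local Open Scope ring_scope.
Local Open Scope complex_scope.

(* Since [d_a psi] is a common eigenvector of the stabilizers with sign pattern [a], the
   columns of [Phi] are orthonormal and [Phi^-1 d_a s_b Phi = X_a Z_b].  On each qubit,
   [X^a2 Z^b2] is a phase times [P X^a1 Z^b1] with [P] the Pauli [X], [Y], [Z] or [I] read off
   from [(a1 + a2, b1 + b2)]; hence [Phi^-1 U Phi = (phi1 + phi2 c Q) X_d1 Z_s1] where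
   [Q = X_Ix Y_Iy Z_Iz] and [c] is a phase.  [Q] is a hermitian involution, traceless since
   [d1 <> d2] or [s1 <> s2], so unitarity of [phi1 + phi2 c Q] is equivalent to
   [|phi1|^2 + |phi2 c|^2 = 1] and [Re (phi1^* phi2 c) = 0]: the planar vectors [phi1] and
   [i phi2 c] are parallel, i.e. [phi1 = e^(i beta) cos theta], [phi2 c = -i e^(i beta) sin theta]. *)

Lemma eq_from_bits m a b : (a < 2 ^ m)%N -> (b < 2 ^ m)%N ->
  (forall j, (j < m)%N -> odd (a %/ 2 ^ j) = odd (b %/ 2 ^ j)) -> a = b.
Proof.
elim: m a b => [|m IHm] a b; first by rewrite expn0 !ltnS !leqn0 => /eqP -> /eqP ->.
move=> a_lt b_lt eq_bits.
have odd_ab : odd a = odd b by have := eq_bits 0%N isT; rewrite !expn0 !divn1.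
have half_ab : a./2 = b./2.
  apply: IHm; try by rewrite -divn2 ltn_divLR // -expnSr.
  by move=> j lt_jm; have := eq_bits j.+1 lt_jm; rewrite expnS !divnMA !divn2.
by rewrite -[a]odd_double_half -[b]odd_double_half odd_ab half_ab.
Qed.

Section BasisIndices.
Variable n : nat.
Local Notation N := (2 ^ n)%N.

Lemma bits_inj (a b : 'I_N) : (forall j : 'I_n, bit a j = bit b j) -> a = b.
Proof.
move=> eq_ab; apply: val_inj; apply: (@eq_from_bits n); rewrite ?ltn_ord // => j lt_jn.
exact: (eq_ab (Ordinal lt_jn)).
Qed.

Lemma bits_neq (a b : 'I_N) : a != b -> exists j : 'I_n, bit a j != bit b j.
Proof.
move=> neq_ab; apply/existsP; apply: contraR neq_ab => /existsPn eq_ab.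
by apply/eqP; apply: bits_inj => j; apply/eqP; exact: negbNE (eq_ab j).
Qed.

Definition bits_ffun (k : 'I_N) : {ffun 'I_n -> bool} := [ffun j => bit k j].

Lemma bits_ffun_bij : bijective bits_ffun.
Proof.
apply: inj_card_bij; last by rewrite card_ffun card_bool !card_ord.
by move=> a b /ffunP eq_ab; apply: bits_inj => j; have := eq_ab j; rewrite !ffunE.
Qed.

Lemma bits_surj (v : 'I_n -> bool) : exists k : 'I_N, forall j, bit k j = v j.
Proof.
have [g _ gK] := bits_ffun_bij; exists (g [ffun j => v j]) => j.
by have /ffunP/(_ j) := gK [ffun j => v j]; rewrite !ffunE.
Qed.

Variable R : comPzRingType.

Lemma sum_prod_bits (F : 'I_n -> bool -> R) :
  \sum_(k < N) \prod_(j < n) F j (bit k j) = \prod_(j < n) (F j false + F j true).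
Proof.
transitivity (\prod_(j < n) \sum_(b : bool) F j b); last first.
  by apply: eq_bigr => j _; rewrite big_bool addrC.
rewrite bigA_distr_bigA /= (reindex bits_ffun); last exact: onW_bij bits_ffun_bij.
by apply: eq_bigr => k _; apply: eq_bigr => j _; rewrite ffunE.
Qed.

Definition tensormx (f : 'I_n -> bool -> bool -> R) : 'M[R]_N :=
  \matrix_(a < N, b < N) \prod_(j < n) f j (bit a j) (bit b j).

Definition qmul (f g : bool -> bool -> R) x y := f x false * g false y + f x true * g true y.

Lemma tensormxM f g : tensormx f *m tensormx g = tensormx (fun j => qmul (f j) (g j)).
Proof.
apply/matrixP => a b; rewrite !mxE.
under eq_bigr => k _ do rewrite !mxE -big_split /=.
exact: (sum_prod_bits (fun j z => f j (bit a j) z * g j z (bit b j))).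
Qed.

Lemma tensormx1 : tensormx (fun _ x y => (x == y)%:R) = 1%:M.
Proof.
apply/matrixP => a b; rewrite !mxE; have [->|/bits_neq [j neq_j]] := eqVneq a b.
  by rewrite big1 // => j _; rewrite eqxx.
by rewrite (bigD1 j) //= (negbTE neq_j) mul0r.
Qed.

Lemma eq_tensormx f g : (forall j x y, f j x y = g j x y) -> tensormx f = tensormx g.
Proof. by move=> eq_fg; apply/matrixP => a b; rewrite !mxE; apply: eq_bigr. Qed.

Lemma tensormxZ f g (c : 'I_n -> R) : (forall j x y, f j x y = c j * g j x y) ->
  tensormx f = (\prod_(j < n) c j) *: tensormx g.
Proof.
by move=> eq_fg; apply/matrixP => a b; rewrite !mxE -big_split; apply: eq_bigr.
Qed.

Lemma mxtrace_tensormx f : \tr (tensormx f) = \prod_(j < n) (f j false false + f j true true).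
Proof.
rewrite -(sum_prod_bits (fun j x => f j x x)); apply: eq_bigr => k _; exact: mxE.
Qed.

End BasisIndices.

Section Qubit.
Variable R : realType.
Local Notation C := R[i].

Definition pauli_entry (p : pauli1) : bool -> bool -> C := @pauli1_entry R p.
Definition Xq (a : bool) := pauli_entry (if a then PX else PI).
Definition Yq (a : bool) := pauli_entry (if a then PY else PI).
Definition Zq (a : bool) := pauli_entry (if a then PZ else PI).

Definition xyz_pauli (dx z : bool) : pauli1 :=
  if dx then (if z then PY else PX) else (if z then PZ else PI).

Definition xz_phase a1 a2 b1 b2 : C :=
  (if (a1 (+) a2) && (b1 (+) b2) then - 'i%R else 1) * (if (b1 (+) b2) && a1 then -1 else 1).

Ltac qubit_simpl := rewrite /xz_phase /xyz_pauli /qmul /Xq /Yq /Zq /pauli_entry /=;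
  rewrite ?complexiE ?(subr0, oppr0, mul0r, mulr0, mul1r, mulr1, add0r, addr0, mulrN, mulNr,
                        opprK, mulCii).

Lemma conjc_pauli_entry p x y : conjc (pauli_entry p y x) = pauli_entry p x y.
Proof.
case: p x y => [] [] []; rewrite /pauli_entry /=; apply/eqP.
all: by rewrite eq_complex /= ?oppr0 ?opprK !eqxx.
Qed.

Lemma pauli_entry_sqr p x y : qmul (pauli_entry p) (pauli_entry p) x y = (x == y)%:R.
Proof. by case: p x y => [] [] []; qubit_simpl. Qed.

Lemma pauli_entry_trace p :
  pauli_entry p false false + pauli_entry p true true = if p is PI then 2 else 0.
Proof. by case: p; qubit_simpl; rewrite ?subrr. Qed.

Lemma XYZq_pauli dx z x y :
  qmul (qmul (Xq (dx (+) (dx && z))) (Yq (dx && z))) (Zq (z (+) (dx && z))) x y =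
  pauli_entry (xyz_pauli dx z) x y.
Proof. by case: dx z x y => [] [] [] []; qubit_simpl. Qed.

Lemma XZq_factor a1 a2 b1 b2 x y :
  qmul (Xq a2) (Zq b2) x y = xz_phase a1 a2 b1 b2 *
    qmul (pauli_entry (xyz_pauli (a1 (+) a2) (b1 (+) b2))) (qmul (Xq a1) (Zq b1)) x y.
Proof. by case: a1 a2 b1 b2 x y => [] [] [] [] [] []; qubit_simpl. Qed.

Lemma XZq_entry a b x y : qmul (Xq a) (Zq b) x y = (x == y (+) a)%:R * (if b && y then -1 else 1).
Proof. by case: a b x y => [] [] [] []; qubit_simpl. Qed.

End Qubit.

Lemma mulmx_scalar_add_invol (F : comPzRingType) m (Q : 'M[F]_m) (a b c e : F) :
  Q *m Q = 1%:M ->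
  (a *: 1%:M + b *: Q) *m (c *: 1%:M + e *: Q) = (a * c + b * e) *: 1%:M + (a * e + b * c) *: Q.
Proof.
move=> QQ; rewrite mulmxDl !mulmxDr -!scalemxAl -!scalemxAr !mul1mx !mulmx1 QQ !scalerA.
by rewrite !scalerDl [(b * c) *: Q + _]addrC addrACA.
Qed.

Lemma scalar_add_traceless_eq1 (F : numFieldType) m (Q : 'M[F]_m) (a b : F) :
  \tr Q = 0 -> Q != 0 -> a *: 1%:M + b *: Q = 1%:M -> a = 1 /\ b = 0.
Proof.
move=> trQ Q_neq0 eq1.
have m_neq0 : m%:R != 0 :> F.
  rewrite pnatr_eq0; apply: contra Q_neq0 => /eqP m0.
  by apply/eqP/matrixP => i; have := ltn_ord i; rewrite {2}m0.
have a1 : a = 1.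
  have := congr1 mxtrace eq1; rewrite mxtraceD !mxtraceZ trQ mulr0 addr0 mxtrace1 => eq_tr.
  by apply: (mulIf m_neq0); rewrite mul1r.
split=> //; move: eq1; rewrite a1 scale1r -{2}[1%:M]addr0 => /addrI /eqP.
by rewrite scaler_eq0 (negbTE Q_neq0) orbF => /eqP.
Qed.

Lemma involution_neq0 (F : nzRingType) m (Q : 'M[F]_m) : (0 < m)%N -> Q *m Q = 1%:M -> Q != 0.
Proof.
move=> m_gt0 QQ; apply/eqP => Q0; move: QQ; rewrite Q0 mul0mx.
move/matrixP/(_ (Ordinal m_gt0) (Ordinal m_gt0)); rewrite !mxE eqxx /=.
by move/eqP; rewrite eq_sym oner_eq0.
Qed.

Section ConjTranspose.
Variable R : realType.
Local Notation C := R[i].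

Lemma ctrmxM m p q (A : 'M[C]_(m, p)) (B : 'M[C]_(p, q)) : ctrmx (A *m B) = ctrmx B *m ctrmx A.
Proof. by rewrite /ctrmx map_mxM trmx_mul. Qed.

Lemma ctrmxD m p (A B : 'M[C]_(m, p)) : ctrmx (A + B) = ctrmx A + ctrmx B.
Proof. by rewrite /ctrmx map_mxD linearD. Qed.

Lemma ctrmxZ m p c (A : 'M[C]_(m, p)) : ctrmx (c *: A) = conjc c *: ctrmx A.
Proof. by rewrite /ctrmx map_mxZ linearZ. Qed.

Lemma ctrmxK m p (A : 'M[C]_(m, p)) : ctrmx (ctrmx A) = A.
Proof. by apply/matrixP => i j; rewrite !mxE conjcK. Qed.

Lemma ctrmx1 m : ctrmx (1%:M : 'M[C]_m) = 1%:M.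
Proof. by apply/matrixP => i j; rewrite !mxE eq_sym rmorph_nat. Qed.

Lemma unitary_mulmx m (A B : 'M[C]_m) :
  ctrmx A *m A = 1%:M -> ctrmx B *m B = 1%:M -> ctrmx (A *m B) *m (A *m B) = 1%:M.
Proof. by move=> uA uB; rewrite ctrmxM -mulmxA (mulmxA (ctrmx A)) uA mul1mx. Qed.

Lemma unitary_ctrmx m (A : 'M[C]_m) : ctrmx A *m A = 1%:M -> ctrmx (ctrmx A) *m ctrmx A = 1%:M.
Proof. by rewrite ctrmxK; apply: mulmx1C. Qed.

Lemma unitary_cancelr m (A B : 'M[C]_m) :
  ctrmx B *m B = 1%:M -> ctrmx (A *m B) *m (A *m B) = 1%:M -> ctrmx A *m A = 1%:M.
Proof.
move=> uB uAB; have := unitary_mulmx uAB (unitary_ctrmx uB).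
by rewrite -mulmxA (mulmx1C uB) mulmx1.
Qed.

Lemma invmx_unitary m (A : 'M[C]_m) : ctrmx A *m A = 1%:M -> invmx A = ctrmx A.
Proof.
by move=> uA; rewrite -[LHS]mul1mx -uA -mulmxA mulmxV ?mulmx1 //; case: (mulmx1_unit uA).
Qed.

Lemma unitary_conjmx m (A P : 'M[C]_m) : ctrmx P *m P = 1%:M -> ctrmx A *m A = 1%:M ->
  ctrmx (invmx P *m A *m P) *m (invmx P *m A *m P) = 1%:M.
Proof.
by move=> uP uA; rewrite invmx_unitary //; do 2?apply: unitary_mulmx => //; apply: unitary_ctrmx.
Qed.

Lemma unitary_scalar_add_invol m (Q : 'M[C]_m) (a b : C) :
  ctrmx Q = Q -> Q *m Q = 1%:M -> \tr Q = 0 -> Q != 0 ->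
  ctrmx (a *: 1%:M + b *: Q) *m (a *: 1%:M + b *: Q) = 1%:M ->
  conjc a * a + conjc b * b = 1 /\ conjc a * b + conjc b * a = 0.
Proof.
move=> hermQ QQ trQ Q_neq0.
rewrite ctrmxD !ctrmxZ ctrmx1 hermQ mulmx_scalar_add_invol //.
exact: scalar_add_traceless_eq1.
Qed.

Lemma norm1_of_exp4 (c : C) : c ^+ 4 = 1 -> conjc c * c = 1.
Proof.
move=> c4; have c_norm1 : `|c| = 1.
  by apply/eqP; rewrite -(@pexpr_eq1 _ _ 4) // -normrX c4 normr1.
by rewrite mulrC -sqr_normc c_norm1 expr1n.
Qed.

End ConjTranspose.

Section PauliStrings.
Variable R : realType.
Local Notation C := R[i].
Variable n : nat.
Local Notation N := (2 ^ n)%N.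
Local Notation X_ := (@Xv R n).
Local Notation Y_ := (@Yv R n).
Local Notation Z_ := (@Zv R n).
Local Notation P_ := (@pstring R n).

Lemma ctrmx_tensormx (f : 'I_n -> bool -> bool -> C) :
  ctrmx (tensormx f) = tensormx (fun j x y => conjc (f j y x)).
Proof. by apply/matrixP => a b; rewrite !mxE rmorph_prod. Qed.

Lemma pstring_tensormx p : P_ p = tensormx (fun j => pauli_entry R (p j)).
Proof. by []. Qed.

Lemma pstring_herm p : ctrmx (P_ p) = P_ p.
Proof.
by rewrite pstring_tensormx ctrmx_tensormx; apply: eq_tensormx => j x y; apply: conjc_pauli_entry.
Qed.

Lemma pstring_sqr p : P_ p *m P_ p = 1%:M.
Proof.
rewrite pstring_tensormx tensormxM -tensormx1.
by apply: eq_tensormx => j x y; apply: pauli_entry_sqr.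
Qed.

Lemma XZ_unitary a b : ctrmx (X_ a *m Z_ b) *m (X_ a *m Z_ b) = 1%:M.
Proof. by apply: unitary_mulmx; rewrite pstring_herm pstring_sqr. Qed.

Lemma xyz_pauli_nontrivial (d1 d2 s1 s2 : 'I_n -> bool) :
  d1 <> d2 \/ s1 <> s2 -> exists j, xyz_pauli (bxor d1 d2 j) (bxor s1 s2 j) <> PI.
Proof.
move=> neq_ds; suff /existsP [j neq_j] : [exists j, (d1 j != d2 j) || (s1 j != s2 j)].
  exists j; move: neq_j; rewrite /bxor.
  by case: (d1 j); case: (d2 j); case: (s1 j); case: (s2 j).
apply: contraT => /existsPn eq_ds.
have eq_j j : d1 j = d2 j /\ s1 j = s2 j.
  by move: (eq_ds j); rewrite negb_or !negbK => /andP [/eqP ? /eqP ?].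
by case: neq_ds => -[]; apply: functional_extensionality => j; case: (eq_j j).
Qed.

Lemma mxtrace_pstring p j : p j <> PI -> \tr (P_ p) = 0.
Proof.
move=> pj_nI; rewrite pstring_tensormx mxtrace_tensormx (bigD1 j) //= pauli_entry_trace.
by case: (p j) pj_nI => // _; rewrite mul0r.
Qed.

Lemma XZ_tensormx a b : X_ a *m Z_ b = tensormx (fun j => qmul (Xq R (a j)) (Zq R (b j))).
Proof. exact: tensormxM. Qed.

Lemma XYZ_pstring dx z :
  X_ (bxor dx (band dx z)) *m Y_ (band dx z) *m Z_ (bxor z (band dx z)) =
  P_ (fun j => xyz_pauli (dx j) (z j)).
Proof.
rewrite /Xv /Yv /Zv !pstring_tensormx !tensormxM.
by apply: eq_tensormx => j x y; apply: XYZq_pauli.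
Qed.

Lemma XZ_factor a1 a2 b1 b2 :
  X_ a2 *m Z_ b2 = (\prod_(j < n) xz_phase R (a1 j) (a2 j) (b1 j) (b2 j)) *:
    (P_ (fun j => xyz_pauli (bxor a1 a2 j) (bxor b1 b2 j)) *m (X_ a1 *m Z_ b1)).
Proof.
rewrite pstring_tensormx !XZ_tensormx tensormxM.
by apply: tensormxZ => j x y; apply: XZq_factor.
Qed.

Lemma XZ_entry a b (k l : 'I_N) : (X_ a *m Z_ b) k l =
  \prod_(j < n) ((bit k j == bit l j (+) a j)%:R * (if b j && bit l j then -1 else 1)).
Proof. by rewrite XZ_tensormx mxE; apply: eq_bigr => j _; apply: XZq_entry. Qed.

Lemma mulmx_XZ_entry (M : 'M[C]_N) a b (r l k : 'I_N) : (forall j, bit k j = bit l j (+) a j) ->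
  (M *m (X_ a *m Z_ b)) r l = M r k * \prod_(j < n) (if b j && bit l j then -1 else 1).
Proof.
move=> bits_k; rewrite mxE (bigD1 k) //= big1 ?addr0 => [|k' /bits_neq [j neq_j]].
  by rewrite XZ_entry; congr (_ * _); apply: eq_bigr => j _; rewrite bits_k eqxx mul1r.
by rewrite XZ_entry (bigD1 j) //= -bits_k (negbTE neq_j) !mul0r mulr0.
Qed.

End PauliStrings.

Section OrderedProducts.
Variables (F : comPzRingType) (m : nat) (I : Type).
Implicit Types (g : I -> 'M[F]_m) (a b : I -> bool) (r : seq I).

Definition gprod_seq g a r : 'M[F]_m := \big[mulmx/1%:M]_(j <- r) (if a j then g j else 1%:M).

Lemma gprod_seq_cons g a j r :
  gprod_seq g a (j :: r) = (if a j then g j else 1%:M) *m gprod_seq g a r.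
Proof. exact: big_cons. Qed.

Lemma gprod_seq_false g a r : (forall j, a j = false) -> gprod_seq g a r = 1%:M.
Proof.
by move=> a_false; elim: r => [|j r IHr]; [exact: big_nil | rewrite gprod_seq_cons a_false mul1mx].
Qed.

Lemma commmx_gprod_seq (M : 'M[F]_m) g a r :
  (forall j, M *m g j = g j *m M) -> M *m gprod_seq g a r = gprod_seq g a r *m M.
Proof.
move=> commM; elim: r => [|j r IHr]; first by rewrite /gprod_seq big_nil mulmx1 mul1mx.
rewrite gprod_seq_cons mulmxA; case: (a j); last by rewrite mul1mx -mulmxA -IHr mul1mx.
by rewrite commM -!mulmxA IHr.
Qed.

Lemma gprod_seq_xor g a b r :
  (forall i j, g i *m g j = g j *m g i) -> (forall j, g j *m g j = 1%:M) ->
  gprod_seq g a r *m gprod_seq g b r = gprod_seq g (fun j => a j (+) b j) r.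
Proof.
move=> comm_g g_sqr; elim: r => [|j r IHr]; first by rewrite /gprod_seq !big_nil mulmx1.
rewrite !gprod_seq_cons -IHr -mulmxA (mulmxA (gprod_seq g a r)).
have ->: gprod_seq g a r *m (if b j then g j else 1%:M) =
         (if b j then g j else 1%:M) *m gprod_seq g a r.
  by case: (b j); rewrite ?mul1mx ?mulmx1 // commmx_gprod_seq.
by rewrite !mulmxA; case: (a j); case: (b j); rewrite /= ?mul1mx ?mulmx1 ?g_sqr ?mul1mx.
Qed.

Lemma gprod_seq_anticomm (M : 'M[F]_m) g a r (sg : I -> F) :
  (forall j, M *m g j = sg j *: (g j *m M)) ->
  M *m gprod_seq g a r = (\prod_(j <- r) (if a j then sg j else 1)) *: (gprod_seq g a r *m M).
Proof.
move=> anti_M; elim: r => [|j r IHr].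
  by rewrite /gprod_seq !big_nil mulmx1 mul1mx scale1r.
rewrite gprod_seq_cons big_cons mulmxA; case: (a j); last by rewrite mul1r mulmx1 mul1mx IHr.
by rewrite anti_M -scalemxAl -mulmxA IHr -scalemxAr scalerA mulmxA.
Qed.

End OrderedProducts.

Lemma unitary_gprod_seq (R : realType) m (I : Type) (g : I -> 'M[R[i]]_m) a r :
  (forall j, ctrmx (g j) *m g j = 1%:M) -> ctrmx (gprod_seq g a r) *m gprod_seq g a r = 1%:M.
Proof.
move=> unit_g; elim: r => [|j r IHr]; first by rewrite /gprod_seq big_nil ctrmx1 mulmx1.
rewrite gprod_seq_cons; apply: unitary_mulmx => //.
by case: (a j); rewrite ?ctrmx1 ?mulmx1.
Qed.

Section StabilizerBasis.
Variable R : realType.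
Local Notation C := R[i].
Variable n : nat.
Local Notation N := (2 ^ n)%N.
Local Notation Mx := 'M[C]_N.

Lemma herm_pauli_sqr (M : Mx) : is_pauli M -> Defs.hermitian M -> M *m M = 1%:M.
Proof.
move=> [c [p [c4 ->]]] hermM; rewrite -[X in X *m _]hermM ctrmxZ -scalemxAl -scalemxAr.
by rewrite scalerA norm1_of_exp4 // scale1r pstring_herm pstring_sqr.
Qed.

Lemma gprodE (g : 'I_n -> Mx) a : gprod g a = gprod_seq g a (index_enum 'I_n).
Proof. by []. Qed.

Variables (s d : 'I_n -> Mx) (psi : 'cV[C]_N).
Hypothesis basis : stabilizer_basis s d.
Hypothesis psi_unit : ctrmx psi *m psi = 1%:M.
Hypothesis psi_stab : forall j, s j *m psi = psi.

Lemma s_herm j : ctrmx (s j) = s j.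
Proof. by case: basis => /(_ j) []. Qed.

Lemma d_herm j : ctrmx (d j) = d j.
Proof. by case: basis => _ [/(_ j) []]. Qed.

Lemma d_sqr j : d j *m d j = 1%:M.
Proof. by case: basis => _ [/(_ j) [] *]; apply: herm_pauli_sqr. Qed.

Lemma gprod_d_xor a b : gprod d a *m gprod d b = gprod d (bxor a b).
Proof. by rewrite !gprodE gprod_seq_xor //; [case: basis => _ [_ [_ []]] | apply: d_sqr]. Qed.

Lemma gprod_d_unitary a : ctrmx (gprod d a) *m gprod d a = 1%:M.
Proof. by rewrite gprodE; apply: unitary_gprod_seq => j; rewrite d_herm d_sqr. Qed.

Lemma gprod_d_herm a : ctrmx (gprod d a) = gprod d a.
Proof.
have d_a_sqr : gprod d a *m gprod d a = 1%:M.
  by rewrite gprod_d_xor gprodE gprod_seq_false // => j; rewrite /bxor addbb.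
by rewrite -[LHS]mulmx1 -d_a_sqr mulmxA gprod_d_unitary mul1mx.
Qed.

Lemma s_gprod_d i a : s i *m gprod d a = (if a i then -1 else 1) *: (gprod d a *m s i).
Proof.
have [_ [_ [_ [_ [s_d_comm [s_d_anti _]]]]]] := basis.
rewrite gprodE (@gprod_seq_anticomm _ _ _ _ _ a _ (fun j => if j == i then -1 else 1)).
  rewrite (bigD1 i) //= eqxx big1 ?mulr1 // => j /negbTE ->.
  by case: (a j).
move=> j; have [->|neq_ji] := eqVneq j i; last by rewrite s_d_comm ?scale1r.
by rewrite s_d_anti scaleN1r opprK.
Qed.

Lemma gprod_s_gprod_d b a : gprod s b *m (gprod d a *m psi) =
  (\prod_(j < n) (if b j && a j then -1 else 1)) *: (gprod d a *m psi).
Proof.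
rewrite gprodE; elim: (index_enum 'I_n) => [|j r IHr].
  by rewrite /gprod_seq !big_nil mul1mx scale1r.
rewrite gprod_seq_cons big_cons -mulmxA IHr -scalemxAr.
case: (b j) => /=; last by rewrite mul1mx mul1r.
by rewrite mulmxA s_gprod_d -scalemxAl -mulmxA psi_stab scalerA mulrC.
Qed.

(* Conjugating by the stabilizer [s j], which anticommutes with [d_a] when [a j] holds,
   negates [<psi | d_a psi>]. *)
Lemma psi_gprod_d_orth (a : 'I_n -> bool) j : a j -> ctrmx psi *m (gprod d a *m psi) = 0.
Proof.
move=> aj; have psi_s : ctrmx psi *m s j = ctrmx psi by rewrite -{1}(s_herm j) -ctrmxM psi_stab.
have d_s : gprod d a *m s j = - (s j *m gprod d a) by rewrite s_gprod_d aj scaleN1r opprK.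
have d_psi : gprod d a *m psi = - (s j *m (gprod d a *m psi)).
  by rewrite -{1}(psi_stab j) mulmxA d_s mulNmx mulmxA.
set Y := ctrmx psi *m _.
have Y_opp : Y = - Y by rewrite {1}/Y d_psi mulmxN (mulmxA (ctrmx psi)) psi_s.
have : 2%:R *: Y == 0 by rewrite scaler_nat mulr2n {1}Y_opp addNr.
by rewrite scalemx_eq0 pnatr_eq0 => /eqP.
Qed.

Local Notation Phi := (Phi_of d psi).

Lemma Phi_gram_entry (a b : 'I_N) : (ctrmx Phi *m Phi) a b =
  (ctrmx (gprod d (bits_of a) *m psi) *m (gprod d (bits_of b) *m psi)) ord0 ord0.
Proof. by rewrite !mxE; apply: eq_bigr => r _; rewrite !mxE. Qed.

Lemma mulmx_Phi_entry (G : Mx) (r l : 'I_N) :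
  (G *m Phi) r l = (G *m (gprod d (bits_of l) *m psi)) r ord0.
Proof. by rewrite !mxE; apply: eq_bigr => k _; rewrite mxE. Qed.

Lemma Phi_unitary : ctrmx Phi *m Phi = 1%:M.
Proof.
apply/matrixP => a b; rewrite Phi_gram_entry ctrmxM gprod_d_herm -mulmxA.
rewrite (mulmxA (gprod d _)) gprod_d_xor; have [<-|neq_ab] := eqVneq a b.
  by rewrite gprodE gprod_seq_false ?mul1mx ?psi_unit ?mxE ?eqxx // => j; rewrite /bxor addbb.
have [j neq_j] := bits_neq neq_ab.
rewrite (@psi_gprod_d_orth _ j) ?mxE ?(negbTE neq_ab) //.
by rewrite /bxor /bits_of; move: neq_j; case: (bit a j); case: (bit b j).
Qed.

Lemma Phi_intertwines a b :
  Phi *m (@Xv R n a *m @Zv R n b) = (gprod d a *m gprod s b) *m Phi.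
Proof.
apply/matrixP => r l; have [k bits_k] := bits_surj (fun j => bit l j (+) a j).
rewrite (mulmx_XZ_entry _ _ _ bits_k) mulmx_Phi_entry -mulmxA gprod_s_gprod_d -scalemxAr.
rewrite mulmxA gprod_d_xor.
have -> : bxor a (bits_of l) = bits_of k.
  by apply: functional_extensionality => j; rewrite /bxor /bits_of bits_k addbC.
by rewrite !mxE mulrC.
Qed.

Lemma conjmx_Phi_gprod a b :
  invmx Phi *m (gprod d a *m gprod s b) *m Phi = @Xv R n a *m @Zv R n b.
Proof. by rewrite -mulmxA -Phi_intertwines mulKmx //; case: (mulmx1_unit Phi_unitary). Qed.

End StabilizerBasis.

Section Angles.
Variable R : realType.

Lemma cos_sin_of_sqr (x y : R) : x ^+ 2 + y ^+ 2 = 1 -> exists t : R, cos t = x /\ sin t = y.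
Proof.
move=> xy1; have x_bnd : -1 <= x <= 1.
  have : x ^+ 2 <= 1 by rewrite -xy1 lerDl sqr_ge0.
  by move=> x2_le1; apply/andP; split; nra.
have sqrt_y : Num.sqrt (1 - x ^+ 2) = `|y| by rewrite -xy1 addrAC subrr add0r sqrtr_sqr.
have [y_ge0|y_lt0] := leP 0 y.
  by exists (acos x); rewrite acosK // sin_acos // sqrt_y ger0_norm.
by exists (- acos x); rewrite cosN sinN acosK // sin_acos // sqrt_y ltr0_norm ?opprK.
Qed.

Lemma polar_parallel (a b c e : R) : a ^+ 2 + b ^+ 2 + c ^+ 2 + e ^+ 2 = 1 -> a * e = b * c ->
  exists t u : R, [/\ a = cos t * cos u, b = cos t * sin u, c = sin t * cos u & e = sin t * sin u].
Proof.
move=> norm1 par; have [ab0|ab_neq0] := eqVneq (a ^+ 2 + b ^+ 2) 0.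
  move/eqP: ab0; rewrite paddr_eq0 ?sqr_ge0 // !sqrf_eq0 => /andP [/eqP a0 /eqP b0].
  have [t [ct st]] : exists t : R, cos t = 0 /\ sin t = 1.
    by apply: cos_sin_of_sqr; rewrite expr0n expr1n add0r.
  rewrite a0 b0 expr0n /= !add0r in norm1.
  have [u [cu su]] : exists u : R, cos u = c /\ sin u = e by apply: cos_sin_of_sqr.
  by exists t, u; rewrite a0 b0 ct st cu su !mul0r !mul1r.
set r := Num.sqrt (a ^+ 2 + b ^+ 2).
have r2 : r ^+ 2 = a ^+ 2 + b ^+ 2 by rewrite sqr_sqrtr // addr_ge0 ?sqr_ge0.
have r_neq0 : r != 0 by rewrite sqrtr_eq0 -ltNge lt_def ab_neq0 addr_ge0 ?sqr_ge0.
have [u [cu su]] : exists u : R, cos u = a / r /\ sin u = b / r.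
  by apply: cos_sin_of_sqr; rewrite !expr_div_n -mulrDl -r2 divff // expf_neq0.
have [ea eb] : a = r * cos u /\ b = r * sin u by rewrite cu su !(mulrC r) !divfK.
have cs := cos2Dsin2 u.
set l := c * cos u + e * sin u; set w := e * cos u - c * sin u.
have w0 : w = 0.
  apply: (mulIf r_neq0); rewrite mul0r.
  have -> : w * r = a * e - b * c.
    by rewrite ea eb /w; ring.
  by rewrite par subrr.
have [t [ct st]] : exists t : R, cos t = r /\ sin t = l.
  apply: cos_sin_of_sqr; have : l ^+ 2 + w ^+ 2 = (c ^+ 2 + e ^+ 2) * (cos u ^+ 2 + sin u ^+ 2).
    by rewrite /l /w; ring.
  by rewrite w0 cs r2; lra.
exists t, u; rewrite ct st; split=> //.
- have : c - l * cos u = c * (1 - (cos u ^+ 2 + sin u ^+ 2)) - sin u * w.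
    by rewrite /l /w; ring.
  by rewrite w0 cs subrr !mulr0 subr0 => /eqP; rewrite subr_eq0 => /eqP.
- have : e - l * sin u = e * (1 - (cos u ^+ 2 + sin u ^+ 2)) + cos u * w.
    by rewrite /l /w; ring.
  by rewrite w0 cs subrr !mulr0 addr0 => /eqP; rewrite subr_eq0 => /eqP.
Qed.

Lemma polar_pair (phi p : R[i]) :
  conjc phi * phi + conjc p * p = 1 -> conjc phi * p + conjc p * phi = 0 ->
  exists theta beta : R,
   [/\ (`|cos theta|)%:C = `|phi|,
       (cos beta +i* sin beta) * (cos theta)%:C = phi &
       (cos beta +i* sin beta) * (Complex 0 1 * (sin theta)%:C) = - p].
Proof.
case: phi p => a b [c e] /eqP; rewrite eq_complex /= => /andP [/eqP norm1 _].
move=> /eqP; rewrite eq_complex /= => /andP [/eqP orth _].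
have [||t [u [ea eb ec ee]]] := @polar_parallel a b (- e) c.
- by move: norm1; rewrite sqrrN !expr2 !mulNr !opprK; lra.
- by move: orth; rewrite mulrN !mulNr !opprK (mulrC c) (mulrC e); lra.
exists t, u; split.
- rewrite normc_def ea eb; congr (_%:C).
  by rewrite -sqrtr_sqr; congr Num.sqrt; rewrite -[LHS]mulr1 -(cos2Dsin2 u) /=; ring.
- by apply/eqP; rewrite eq_complex /= ea eb; apply/andP; split; apply/eqP; ring.
apply/eqP; rewrite eq_complex /= -[c]opprK -[e]opprK ec ee.
by apply/andP; split; apply/eqP; ring.
Qed.

End Angles.

Theorem lemma2 (R : realType) (n : nat)
    (s d : 'I_n -> 'M[R[i]]_(2 ^ n)) (psi : 'cV[R[i]]_(2 ^ n))
    (d1 d2 s1 s2 : 'I_n -> bool) (phi1 phi2 : R[i]) :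
  stabilizer_basis s d ->
  ctrmx psi *m psi = 1%:M ->
  (forall j, s j *m psi = psi) ->
  (d1 <> d2 \/ s1 <> s2) ->
  let U := phi1 *: (gprod d d1 *m gprod s s1) + phi2 *: (gprod d d2 *m gprod s s2) in
  unitary U ->
  let Phi := Phi_of d psi in
  let Iy := band (bxor d1 d2) (bxor s1 s2) in
  let Ix := bxor (bxor d1 d2) Iy in
  let Iz := bxor (bxor s1 s2) Iy in
  exists theta beta : R,
    (`|cos theta|)%:C = `|phi1| /\
    invmx Phi *m U *m Phi =
      (cos beta +i* sin beta) *:
        (((cos theta)%:C *: 1%:M
          - (Complex 0 1 * (sin theta)%:C) *: (@Xv R n Ix *m @Yv R n Iy *m @Zv R n Iz))
         *m (@Xv R n d1 *m @Zv R n s1)).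
Proof.
move=> basis psi_unit psi_stab neq_ds U unitU Phi Iy Ix Iz; rewrite XYZ_pstring.
set Q := @pstring R n _; set P1 := @Xv R n d1 *m _.
set c := \prod_(j < n) xz_phase R (d1 j) (d2 j) (s1 j) (s2 j).
set W := phi1 *: 1%:M + (phi2 * c) *: Q.
have conjU : invmx Phi *m U *m Phi = W *m P1.
  rewrite /U mulmxDr mulmxDl -!scalemxAr -!scalemxAl !conjmx_Phi_gprod //.
  rewrite (@XZ_factor R n d1 d2 s1 s2).
  by rewrite scalerA /W mulmxDl -!scalemxAl mul1mx.
have unitW : ctrmx W *m W = 1%:M.
  have unitP1 : ctrmx P1 *m P1 = 1%:M by apply: XZ_unitary.
  apply: (unitary_cancelr unitP1); rewrite -conjU.
  exact: unitary_conjmx (Phi_unitary basis psi_unit psi_stab) unitU.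
have [j Qj] := xyz_pauli_nontrivial neq_ds.
have sqrQ : Q *m Q = 1%:M by apply: pstring_sqr.
have [norm1 orth] := unitary_scalar_add_invol (pstring_herm R _) sqrQ
  (mxtrace_pstring R Qj) (involution_neq0 (expn_gt0 2 n) sqrQ) unitW.
have [theta [beta [cos_phi1 e_phi1 e_phi2]]] := polar_pair norm1 orth.
exists theta, beta; split=> //.
rewrite conjU /W -e_phi1 -[phi2 * c]opprK -e_phi2.
by rewrite scalemxAl scalerBr !scalerA scaleNr.
Qed.
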